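(* Let $E$ be a Banach $f$-algebra and let $(x_\alpha)_{\alpha\in A}$ and $(y_\beta)_{\beta\in A}$ be nets in $E$ such that $x_\alpha\xrightarrow{mw}x$ and $y_\beta\xrightarrow{mw}y$ for some $x,y\in E$, and such that $(x_\alpha)$ or $(y_\beta)$ is monotone. Then $x_\alpha y_\beta\xrightarrow{mw}xy$ (as a net indexed by $(\alpha,\beta)\in A\times A$).
   Context: All vector lattices are real and Archimedean. An $f$-algebra is a vector lattice with an associative multiplication making it an algebra, such that products of positive elements are positive and $x\wedge y=0$ implies $(xz)\wedge y=(zx)\wedge y=0$ for all $z\ge0$. A Banach $f$-algebra is an $f$-algebra which is a Banach lattice with $\|xy\|\le\|x\|\|y\|$. A net $(x_\alpha)$ in $E$ $mw$-converges to $x$ ($x_\alpha\xrightarrow{mw}x$) if $|x_\alpha-x|u\to0$ weakly for every $u\in E_+$. A net is monotone if it is increasing or decreasing. *)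

From HB Require Import structures.
From mathcomp Require Import all_boot all_order all_algebra.
From mathcomp Require Import all_classical all_reals all_analysis.
Set Implicit Arguments. Unset Strict Implicit. Unset Printing Implicit Defensive.
Import Order.TTheory GRing.Theory Num.Theory.
Import numFieldNormedType.Exports.
Local Open Scope ring_scope.

Definition directed_set (A : Type) (leA : A -> A -> Prop) : Prop :=
  [/\ inhabited A,
      (forall a, leA a a),
      (forall a b c, leA a b -> leA b c -> leA a c) &
      (forall a b, exists c, leA a c /\ leA b c)].

Definition prod_le (A B : Type) (leA : A -> A -> Prop) (leB : B -> B -> Prop)
  (p q : A * B) : Prop := leA p.1 q.1 /\ leB p.2 q.2.

Definition net_cvg_R (R : realType) (A : Type) (leA : A -> A -> Prop)
  (t : A -> R) (l : R) : Prop :=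
  forall eps : R, 0 < eps ->
    exists a0 : A, forall a, leA a0 a -> `|t a - l| < eps.

Section BFA.
Context {R : realType} {E : completeNormedModType R}.
Variables (le : E -> E -> Prop) (join meet : E -> E -> E) (mul : E -> E -> E).

Definition labs (x : E) : E := join x (- x).

Definition vector_lattice : Prop :=
  (forall x, le x x) /\
  (forall x y, le x y -> le y x -> x = y) /\
  (forall x y z, le x y -> le y z -> le x z) /\
  (forall x y z, le x y -> le (x + z) (y + z)) /\
  (forall (a : R) x y, 0 <= a -> le x y -> le (a *: x) (a *: y)) /\
  (forall x y, le x (join x y) /\ le y (join x y) /\
               (forall z, le x z -> le y z -> le (join x y) z)) /\
  (forall x y, le (meet x y) x /\ le (meet x y) y /\
               (forall z, le z x -> le z y -> le z (meet x y))) /\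
  (forall x y, (forall n : nat, le (n%:R *: x) y) -> le x 0).

Definition banach_lattice : Prop :=
  vector_lattice /\
  (forall x y, le (labs x) (labs y) -> `|x| <= `|y|).

Definition algebra_mul : Prop :=
  [/\ (forall x y z, mul (mul x y) z = mul x (mul y z)),
      (forall x y z, mul (x + y) z = mul x z + mul y z),
      (forall x y z, mul x (y + z) = mul x y + mul x z),
      (forall (a : R) x y, mul (a *: x) y = a *: mul x y) &
      (forall (a : R) x y, mul x (a *: y) = a *: mul x y)].

Definition f_algebra : Prop :=
  [/\ vector_lattice, algebra_mul,
      (forall x y, le 0 x -> le 0 y -> le 0 (mul x y)) &
      (forall x y z, meet x y = 0 -> le 0 z ->
         meet (mul x z) y = 0 /\ meet (mul z x) y = 0)].

Definition banach_f_algebra : Prop :=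
  [/\ banach_lattice, f_algebra &
      (forall x y, `|mul x y| <= `|x| * `|y|)].

Definition cont_lin_functional (f : E -> R) : Prop :=
  (forall (a : R) x y, f (a *: x + y) = a * f x + f y) /\ continuous f.

Definition weak_cvg (A : Type) (leA : A -> A -> Prop) (z : A -> E) (l : E)
  : Prop :=
  forall f : E -> R, cont_lin_functional f ->
    net_cvg_R leA (fun a => f (z a)) (f l).

Definition mw_cvg (A : Type) (leA : A -> A -> Prop) (z : A -> E) (l : E)
  : Prop :=
  forall u, le 0 u -> weak_cvg leA (fun a => mul (labs (z a - l)) u) 0.

Definition net_increasing (A : Type) (leA : A -> A -> Prop) (z : A -> E) :=
  forall a b, leA a b -> le (z a) (z b).
Definition net_decreasing (A : Type) (leA : A -> A -> Prop) (z : A -> E) :=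
  forall a b, leA a b -> le (z b) (z a).
Definition net_monotone (A : Type) (leA : A -> A -> Prop) (z : A -> E) :=
  net_increasing leA z \/ net_decreasing leA z.

End BFA.

From HB Require Import structures.
From mathcomp Require Import all_boot all_order all_algebra.
From mathcomp Require Import all_classical all_reals all_analysis.
From mathcomp Require Import ring lra.
Import Order.TTheory GRing.Theory Num.Theory.
Import numFieldNormedType.Exports.
Local Open Scope ring_scope.
Local Open Scope classical_set_scope.

(* Write x_a y_b - x y = x_a (y_b - y) + (x_a - x) y, so that
   |x_a y_b - x y| u <= |x_a| |y_b - y| u + |x_a - x| |y| u.  If, say, (x_a) is
   increasing, then |x_a| <= |x_a0| + |x| + (x_a - x)^+ for a >= a0, and every
   term of the resulting bound is weakly null except (x_a - x)^+ |y_b - y| u.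
   That term vanishes weakly: (x_a - x)^+ <= |x_a' - x| for all a' >= a, so a
   positive functional h satisfies h ((x_a - x)^+ w) <= h (|x_a' - x| w) -> 0
   for w >= 0.  Both this and the passage from the bound to weak nullity rest
   on the Riesz-Kantorovich fact that every continuous functional is dominated
   on the positive cone by a positive one, f^+ (w) = sup {f v | 0 <= v <= w}. *)

Section DirectedNets.
Context {R : realType} {B : Type} {leB : B -> B -> Prop}.
Hypothesis hB : directed_set leB.

Lemma directed_inhabited : inhabited B. Proof. by case: hB. Qed.

Lemma directed_trans {a b c} : leB a b -> leB b c -> leB a c.
Proof. by case: hB => _ _ + _; apply. Qed.

Lemma directed_ub a b : exists c, leB a c /\ leB b c.
Proof. by case: hB => _ _ _; apply. Qed.

Lemma net_cvg0D (s t : B -> R) : net_cvg_R leB s 0 -> net_cvg_R leB t 0 ->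
  net_cvg_R leB (fun b => s b + t b) 0.
Proof.
move=> s0 t0 e e0; have e2 : 0 < e / 2 by rewrite divr_gt0.
have [b1 sb1] := s0 _ e2; have [b2 tb2] := t0 _ e2.
have [c [b1c b2c]] := directed_ub b1 b2; exists c => b cb.
have := sb1 b (directed_trans b1c cb); have := tb2 b (directed_trans b2c cb).
rewrite !subr0 => tb sb; rewrite (splitr e).
exact: le_lt_trans (ler_normD _ _) (ltrD sb tb).
Qed.

Lemma net_cvg0_le (s t : B -> R) :
  (exists b0, forall b, leB b0 b -> `|s b| <= t b) -> net_cvg_R leB t 0 ->
  net_cvg_R leB s 0.
Proof.
move=> [b0 st] t0 e e0; have [b1 tb1] := t0 _ e0.
have [c [b0c b1c]] := directed_ub b0 b1; exists c => b cb.
rewrite subr0; apply: le_lt_trans (st b (directed_trans b0c cb)) _.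
by apply: le_lt_trans (ler_norm _) _; rewrite -[t b]subr0; apply: tb1 (directed_trans b1c cb).
Qed.

End DirectedNets.

Section ProductOrder.
Context {R : realType} {A : Type} {leA : A -> A -> Prop}.

Lemma prod_directed : directed_set leA -> directed_set (prod_le leA leA).
Proof.
move=> hA; split.
- by case: (directed_inhabited hA) => a; constructor; exact: (a, a).
- by move=> p; split; case: hA => _ + _ _; apply.
- move=> p q r [pq1 pq2] [qr1 qr2].
  by split; [exact: (directed_trans hA pq1 qr1) | exact: (directed_trans hA pq2 qr2)].
move=> p q; have [c1 [pc1 qc1]] := directed_ub hA p.1 q.1.
by have [c2 [pc2 qc2]] := directed_ub hA p.2 q.2; exists (c1, c2).
Qed.

Lemma net_cvg_fst (t : A -> R) l : inhabited A -> net_cvg_R leA t l ->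
  net_cvg_R (prod_le leA leA) (fun p => t p.1) l.
Proof.
by move=> [a] tl e e0; have [a0 ta0] := tl _ e0; exists (a0, a) => p [a0p _]; apply: ta0.
Qed.

Lemma net_cvg_snd (t : A -> R) l : inhabited A -> net_cvg_R leA t l ->
  net_cvg_R (prod_le leA leA) (fun p => t p.2) l.
Proof.
by move=> [a] tl e e0; have [a0 ta0] := tl _ e0; exists (a, a0) => p [_ a0p]; apply: ta0.
Qed.

End ProductOrder.

Section ContinuousLinearFunctionals.
Context {R : realType} {E : completeNormedModType R}.

Lemma clf_of_bound {g : E -> R} {M : R} : 0 <= M ->
  (forall (a : R) x y, g (a *: x + y) = a * g x + g y) ->
  (forall x, `|g x| <= M * `|x|) -> cont_lin_functional g.
Proof.
move=> M0 glin gM; split => // x.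
have gB y : g y - g x = g (y - x).
  by rewrite -[- x]scaleN1r [y + _]addrC glin mulN1r addrC.
apply/cvgrPdist_lt => e e0; apply/nbhs_normP.
have M1 : 0 < M + 1 by rewrite ltr_wpDl.
exists (e / (M + 1)); first by rewrite /= divr_gt0.
move=> y /= xy; rewrite distrC gB.
apply: (le_lt_trans (gM _)); rewrite -normrN opprB.
apply: (le_lt_trans (ler_wpM2l M0 (ltW xy))).
by rewrite mulrA ltr_pdivrMr // mulrDr mulr1 mulrC ltrDl.
Qed.

Context {f : E -> R} (hf : cont_lin_functional f).

Lemma clfD x y : f (x + y) = f x + f y.
Proof. by case: hf => flin _; rewrite -[x in f (x + _)]scale1r flin mul1r. Qed.

Lemma clf0 : f 0 = 0.
Proof. by apply: (addrI (f 0)); rewrite -clfD !addr0. Qed.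

Lemma clfZ a x : f (a *: x) = a * f x.
Proof. by case: hf => flin _; rewrite -[a *: x]addr0 flin clf0 addr0. Qed.

Lemma clfN x : f (- x) = - f x.
Proof. by rewrite -scaleN1r clfZ mulN1r. Qed.

Lemma clfB x y : f (x - y) = f x - f y.
Proof. by rewrite clfD clfN. Qed.

Lemma clf_bounded : exists2 M, 0 < M & forall v, `|f v| <= M * `|v|.
Proof.
case: hf => _ /(_ 0)/cvgrPdist_lt/(_ 1 ltr01)/nbhs_norm0P [e /= e0 fe].
exists (2 / e); first by rewrite divr_gt0.
move=> v; have [->|v0] := eqVneq v 0; first by rewrite clf0 !normr0 mulr0.
have nv : 0 < `|v| by rewrite normr_gt0.
pose k := e / (2 * `|v|).
have k0 : 0 < k by rewrite divr_gt0 // mulr_gt0.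
have kv : k * `|v| = e / 2 by rewrite /k; field; rewrite gt_eqF.
have k1 : k * (2 / e * `|v|) = 1 by rewrite /k; field; rewrite !gt_eqF.
clearbody k.
have := fe (k *: v); rewrite /= clf0 sub0r normrN clfZ normrZ normrM (gtr0_norm k0) kv.
move=> /(_ ltac:(lra)) fkv.
by rewrite -(ler_pM2l k0) k1 ltW.
Qed.

Lemma clf_opp : cont_lin_functional (fun v => - f v).
Proof.
have [M M0 fM] := clf_bounded; apply: (clf_of_bound (ltW M0)).
  by move=> a x y; case: hf => flin _; rewrite flin opprD mulrN.
by move=> x; rewrite normrN.
Qed.

End ContinuousLinearFunctionals.

Section WeaklyNullNets.
Context {R : realType} {E : completeNormedModType R}.

Definition weakly_null {B : Type} (leB : B -> B -> Prop) (z : B -> E) : Prop :=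
  forall f : E -> R, cont_lin_functional f -> net_cvg_R leB (fun b => f (z b)) 0.

Lemma weakly_nullD {B} {leB : B -> B -> Prop} {z1 z2 : B -> E} : directed_set leB ->
  weakly_null leB z1 -> weakly_null leB z2 -> weakly_null leB (fun b => z1 b + z2 b).
Proof.
move=> hB z10 z20 f hf; under eq_fun do rewrite (clfD hf).
exact: net_cvg0D (z10 f hf) (z20 f hf).
Qed.

Lemma weakly_null_fst {A} {leA : A -> A -> Prop} {z : A -> E} : inhabited A ->
  weakly_null leA z -> weakly_null (prod_le leA leA) (fun p => z p.1).
Proof. by move=> hA z0 f hf; apply: net_cvg_fst _ _ hA (z0 f hf). Qed.

Lemma weakly_null_snd {A} {leA : A -> A -> Prop} {z : A -> E} : inhabited A ->
  weakly_null leA z -> weakly_null (prod_le leA leA) (fun p => z p.2).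
Proof. by move=> hA z0 f hf; apply: net_cvg_snd _ _ hA (z0 f hf). Qed.

Lemma weakly_null_clf0 {B} {leB : B -> B -> Prop} {z : B -> E} : inhabited B ->
  (forall f, cont_lin_functional f -> forall b, f (z b) = 0) -> weakly_null leB z.
Proof. by move=> [b0] fz0 f hf e e0; exists b0 => b _; rewrite fz0 // subr0 normr0. Qed.

End WeaklyNullNets.

Section BanachFAlgebra.
Context {R : realType} {E : completeNormedModType R}.
Variables (le : E -> E -> Prop) (join meet mul : E -> E -> E).
Hypothesis hVL : vector_lattice le join meet.

Definition ppart (x : E) : E := join x 0.

Local Notation labs := (labs join).

Lemma lle_refl x : le x x. Proof. by case: hVL. Qed.

Lemma lle_anti {x y} : le x y -> le y x -> x = y.
Proof. by case: hVL => _ [+ _]; apply. Qed.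

Lemma lle_trans {x y z} : le x y -> le y z -> le x z.
Proof. by case: hVL => _ [_ [+ _]]; apply. Qed.

Lemma lleD2r {x y} z : le x y -> le (x + z) (y + z).
Proof. by case: hVL => _ [_ [_ [+ _]]]; apply. Qed.

Lemma lleZ {a : R} {x y} : 0 <= a -> le x y -> le (a *: x) (a *: y).
Proof. by case: hVL => _ [_ [_ [_ [+ _]]]]; apply. Qed.

Lemma join_is_lub x y : le x (join x y) /\ le y (join x y) /\
  (forall z, le x z -> le y z -> le (join x y) z).
Proof. by case: hVL => _ [_ [_ [_ [_ [+ _]]]]]; apply. Qed.

Lemma meet_is_glb x y : le (meet x y) x /\ le (meet x y) y /\
  (forall z, le z x -> le z y -> le z (meet x y)).
Proof. by case: hVL => _ [_ [_ [_ [_ [_ [+ _]]]]]]; apply. Qed.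

Lemma join_ubl x y : le x (join x y). Proof. by case: (join_is_lub x y). Qed.

Lemma join_ubr x y : le y (join x y). Proof. by case: (join_is_lub x y) => _ []. Qed.

Lemma join_lub x y z : le x z -> le y z -> le (join x y) z.
Proof. by case: (join_is_lub x y) => _ [_]; apply. Qed.

Lemma meet_lbl x y : le (meet x y) x. Proof. by case: (meet_is_glb x y). Qed.

Lemma meet_lbr x y : le (meet x y) y. Proof. by case: (meet_is_glb x y) => _ []. Qed.

Lemma meet_glb x y z : le z x -> le z y -> le z (meet x y).
Proof. by case: (meet_is_glb x y) => _ [_]; apply. Qed.

#[local] Hint Resolve lle_refl join_ubl join_ubr meet_lbl meet_lbr : core.

Lemma lscale_ge0 {a : R} {x} : 0 <= a -> le 0 x -> le 0 (a *: x).
Proof. by move=> a0 x0; rewrite -(scaler0 _ a); apply: lleZ. Qed.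

Lemma lleD2l {x y} z : le x y -> le (z + x) (z + y).
Proof. by rewrite ![z + _]addrC; apply: lleD2r. Qed.

Lemma lleD {a b c d} : le a b -> le c d -> le (a + c) (b + d).
Proof. by move=> ab cd; apply: (lle_trans (lleD2r c ab)); apply: lleD2l. Qed.

Lemma laddr_ge0 {a b} : le 0 a -> le 0 b -> le 0 (a + b).
Proof. by move=> a0 b0; rewrite -[0]addr0; apply: lleD. Qed.

Lemma lleDr {a b c} : le a b -> le 0 c -> le a (b + c).
Proof. by move=> ab c0; rewrite -[a]addr0; apply: lleD. Qed.

Lemma lleDl {a b c} : le a b -> le 0 c -> le a (c + b).
Proof. by rewrite addrC; apply: lleDr. Qed.

Lemma lsubr_ge0 x y : le 0 (y - x) <-> le x y.
Proof.
split; first by move=> /(lleD2r x); rewrite add0r subrK.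
by move=> /(lleD2r (- x)); rewrite subrr.
Qed.

Lemma lleN {x y} : le x y -> le (- y) (- x).
Proof. by move=> /lsubr_ge0 xy; apply/lsubr_ge0; rewrite opprK addrC. Qed.

Lemma loppr_le0 {x} : le 0 x -> le (- x) 0.
Proof. by move=> /lleN; rewrite oppr0. Qed.

Lemma joinC x y : join x y = join y x.
Proof. by apply: lle_anti; apply: join_lub. Qed.

Lemma joinDr z x y : join (x + z) (y + z) = join x y + z.
Proof.
apply: lle_anti; first by apply: join_lub; apply: lleD2r.
rewrite -[X in le _ X](subrK z); apply: lleD2r; apply: join_lub.
  by have := lleD2r (- z) (join_ubl (x + z) (y + z)); rewrite addrK.
by have := lleD2r (- z) (join_ubr (x + z) (y + z)); rewrite addrK.
Qed.

Lemma meetE x y : meet x y = - join (- x) (- y).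
Proof.
apply: lle_anti.
  by rewrite -[meet x y]opprK; apply: lleN; apply: join_lub; apply: lleN.
by apply: meet_glb; rewrite -[X in le _ X]opprK; apply: lleN.
Qed.

Lemma labs_ub x : le x (labs x). Proof. exact: join_ubl. Qed.

Lemma labsN_ub x : le (- x) (labs x). Proof. exact: join_ubr. Qed.

Lemma labs_lub x z : le x z -> le (- x) z -> le (labs x) z.
Proof. exact: join_lub. Qed.

Lemma labs_ge0 x : le 0 (labs x).
Proof.
have x2 : le 0 (labs x + labs x).
  by rewrite -(subrr x); apply: lleD; [exact: labs_ub | exact: labsN_ub].
have half0 : 0 <= (2 : R)^-1 by rewrite invr_ge0 ler0n.
have := lleZ half0 x2.
by rewrite scaler0 -mulr2n -[labs x *+ 2]scaler_nat scalerA mulVf ?pnatr_eq0 // scale1r.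
Qed.

Lemma labsD_le x y : le (labs (x + y)) (labs x + labs y).
Proof.
apply: labs_lub; first by apply: lleD; apply: labs_ub.
by rewrite opprD; apply: lleD; apply: labsN_ub.
Qed.

Lemma labsN x : labs (- x) = labs x.
Proof. by rewrite /labs opprK joinC. Qed.

Lemma labs_subC x y : labs (x - y) = labs (y - x).
Proof. by rewrite -labsN opprB. Qed.

Lemma labs_id x : le 0 x -> labs x = x.
Proof.
move=> x0; apply: lle_anti; last exact: labs_ub.
by apply: labs_lub => //; apply: lle_trans (loppr_le0 x0) x0.
Qed.

Lemma labs_le_add x y : le 0 x -> le 0 y -> le (labs (x - y)) (x + y).
Proof.
move=> x0 y0; apply: labs_lub.
  by apply: (lleD2l x); apply: lle_trans (loppr_le0 y0) y0.
by rewrite opprB [x + y]addrC; apply: (lleD2l y); apply: lle_trans (loppr_le0 x0) x0.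
Qed.

Lemma ppart_ge0 x : le 0 (ppart x). Proof. exact: join_ubr. Qed.

Lemma ppart_ub x : le x (ppart x). Proof. exact: join_ubl. Qed.

#[local] Hint Resolve labs_ge0 ppart_ge0 : core.

Lemma ppart_le_labs x : le (ppart x) (labs x).
Proof. by apply: join_lub => //; apply: labs_ub. Qed.

Lemma ppart_mono {x y} : le x y -> le (ppart x) (ppart y).
Proof. by move=> xy; apply: join_lub => //; apply: lle_trans xy (ppart_ub y). Qed.

Lemma ppartN x : ppart (- x) = join 0 x - x.
Proof. by rewrite /ppart -joinDr subrr add0r. Qed.

Lemma ppart_decomp x : x = ppart x - ppart (- x).
Proof. by rewrite ppartN /ppart joinC opprB addrC subrK. Qed.

Lemma ppartD_ppartN x : ppart x + ppart (- x) = labs x.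
Proof.
rewrite {1}/ppart -joinDr add0r [x + _]addrC /ppart -joinDr addNr add0r.
apply: lle_anti.
  by apply: join_lub; apply: join_lub => //; [exact: labs_ub | exact: labsN_ub].
apply: labs_lub.
  by apply: lle_trans (join_ubl _ _); apply: join_ubr.
by apply: lle_trans (join_ubr _ _); apply: join_ubl.
Qed.

Lemma riesz_decomposition {v w1 w2} :
  le 0 v -> le 0 w1 -> le 0 w2 -> le v (w1 + w2) ->
  exists v1 v2, [/\ v = v1 + v2, le 0 v1, le v1 w1, le 0 v2 & le v2 w2].
Proof.
move=> v0 w10 w20 vw; exists (meet v w1), (v - meet v w1); split => //.
- by rewrite addrC subrK.
- exact: meet_glb.
- exact/lsubr_ge0.
rewrite meetE opprK addrC -joinDr addNr; apply: join_lub => //.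
by have := lleD2l (- w1) vw; rewrite addrA addNr add0r.
Qed.

Lemma labs_le_ppart l {t0 t} : le t0 t ->
  le (labs t) (labs t0 + labs l + ppart (t - l)).
Proof.
move=> t0t; apply: labs_lub.
  have tl : le t (ppart (t - l) + labs l).
    by rewrite -{1}[t](subrK l); apply: lleD; [exact: ppart_ub | exact: labs_ub].
  by apply: lle_trans tl _; rewrite -addrA [labs l + _]addrC; apply: lleDl.
apply: (lle_trans (lleN t0t)); rewrite -addrA.
by apply: lleDr; [exact: labsN_ub | exact: laddr_ge0].
Qed.

Hypothesis lattice_norm : forall x y, le (labs x) (labs y) -> `|x| <= `|y|.

Lemma norm_le_ge0 {v w} : le 0 v -> le v w -> `|v| <= `|w|.
Proof.
by move=> v0 vw; apply: lattice_norm; rewrite !labs_id //; apply: lle_trans v0 vw.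
Qed.

Lemma norm_ppart_le x : `|ppart x| <= `|x|.
Proof. by apply: lattice_norm; rewrite labs_id //; apply: ppart_le_labs. Qed.

Definition positive_functional (h : E -> R) := forall v, le 0 v -> 0 <= h v.

Lemma positive_functional_mono {h a b} : cont_lin_functional h ->
  positive_functional h -> le a b -> h a <= h b.
Proof.
by move=> hh hpos /lsubr_ge0 ab; rewrite -subr_ge0 -(clfB hh); apply: hpos.
Qed.

Section PositiveMajorant.
Variable f : E -> R.
Hypothesis hf : cont_lin_functional f.

Local Notation fimage w := [set f v | v in [set v | le 0 v /\ le v w]].

Definition fplus (w : E) : R := sup (fimage w).

Let fimage_n0 w : le 0 w -> fimage w !=set0.
Proof. by move=> w0; exists 0, 0 => //; rewrite clf0. Qed.

Lemma fplus_has_sup w : le 0 w -> has_sup (fimage w).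
Proof.
move=> w0; have [M M0 fM] := clf_bounded hf; split; first exact: fimage_n0.
exists (M * `|w|) => _ [v [v0 vw] <-].
apply: le_trans (ler_norm _) (le_trans (fM v) _).
by rewrite ler_pM2l //; apply: norm_le_ge0 v0 vw.
Qed.

Lemma fplus_ub w v : le 0 v -> le v w -> f v <= fplus w.
Proof.
move=> v0 vw; apply: sup_upper_bound; first exact/fplus_has_sup/(lle_trans v0 vw).
by exists v.
Qed.

Lemma fplus_le w c : le 0 w -> (forall v, le 0 v -> le v w -> f v <= c) -> fplus w <= c.
Proof. by move=> w0 fc; apply: ge_sup; [exact: fimage_n0 | move=> _ [v [v0 vw] <-]; apply: fc]. Qed.

Lemma fplus_ge0 w : le 0 w -> 0 <= fplus w.
Proof. by move=> w0; rewrite -(clf0 hf); apply: fplus_ub. Qed.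

Lemma fplus_ge w : le 0 w -> f w <= fplus w.
Proof. by move=> w0; apply: fplus_ub. Qed.

Lemma fplus_bounded : exists2 M, 0 < M & forall w, le 0 w -> fplus w <= M * `|w|.
Proof.
have [M M0 fM] := clf_bounded hf; exists M => // w w0.
apply: fplus_le => // v v0 vw; apply: le_trans (ler_norm _) (le_trans (fM v) _).
by rewrite ler_pM2l //; apply: norm_le_ge0 v0 vw.
Qed.

Lemma fplusD {w1 w2} : le 0 w1 -> le 0 w2 -> fplus (w1 + w2) = fplus w1 + fplus w2.
Proof.
move=> w10 w20; have w0 := laddr_ge0 w10 w20; apply/eqP; rewrite eq_le; apply/andP; split.
  apply: fplus_le => // v v0 vw.
  have [v1 [v2 [-> v10 vw1 v20 vw2]]] := riesz_decomposition v0 w10 w20 vw.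
  by rewrite (clfD hf); apply: lerD; apply: fplus_ub.
rewrite -lerBrDr; apply: fplus_le => // v1 v10 vw1.
rewrite lerBrDr addrC -lerBrDr; apply: fplus_le => // v2 v20 vw2.
rewrite lerBrDr addrC -(clfD hf); apply: fplus_ub; first exact: laddr_ge0.
exact: lleD.
Qed.

Lemma fplus0 : fplus 0 = 0.
Proof.
apply: le_anti; rewrite fplus_ge0 // andbT; apply: fplus_le => // v v0 v_le0.
by rewrite (lle_anti v_le0 v0) (clf0 hf).
Qed.

Lemma fplusZ a w : 0 <= a -> le 0 w -> fplus (a *: w) = a * fplus w.
Proof.
move=> a0 w0; have [->|an0] := eqVneq a 0; first by rewrite scale0r mul0r fplus0.
have ap : 0 < a by rewrite lt_def an0.
apply/eqP; rewrite eq_le; apply/andP; split.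
  apply: fplus_le => [|v v0 vw]; first exact: lscale_ge0.
  have ia0 : 0 <= a^-1 by rewrite invr_ge0.
  rewrite -[v](scalerKV an0) (clfZ hf) ler_wpM2l //; apply: fplus_ub.
    exact: lscale_ge0.
  by rewrite -[w](scalerK an0); apply: lleZ.
rewrite -ler_pdivlMl //; apply: fplus_le => // v v0 vw.
by rewrite ler_pdivlMl // -(clfZ hf); apply: fplus_ub; [exact: lscale_ge0 | exact: lleZ].
Qed.

Definition fplus_ext (x : E) : R := fplus (ppart x) - fplus (ppart (- x)).

Lemma fplus_extB {p q} : le 0 p -> le 0 q -> fplus_ext (p - q) = fplus p - fplus q.
Proof.
move=> p0 q0; have d := ppart_decomp (p - q).
have a0 := ppart_ge0 (p - q); have b0 := ppart_ge0 (- (p - q)).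
set a := ppart (p - q) in d a0 *; set b := ppart (- (p - q)) in d b0 *.
have e : a + q = p + b by rewrite -[p](subrK q) d addrAC subrK.
have := congr1 fplus e; rewrite /fplus_ext !fplusD // => fe; lra.
Qed.

Lemma fplus_ext_ge0 x : le 0 x -> fplus_ext x = fplus x.
Proof. by move=> x0; have := fplus_extB x0 (lle_refl 0); rewrite fplus0 !subr0. Qed.

Lemma fplus_extD x y : fplus_ext (x + y) = fplus_ext x + fplus_ext y.
Proof.
have -> : x + y = (ppart x + ppart y) - (ppart (- x) + ppart (- y)).
  by rewrite opprD addrACA -!ppart_decomp.
have xy0 := laddr_ge0 (ppart_ge0 x) (ppart_ge0 y).
have xyN0 := laddr_ge0 (ppart_ge0 (- x)) (ppart_ge0 (- y)).
rewrite (fplus_extB xy0 xyN0) !(fplusD (ppart_ge0 _) (ppart_ge0 _)).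
by rewrite /fplus_ext opprD addrACA.
Qed.

Lemma fplus_extZ a x : fplus_ext (a *: x) = a * fplus_ext x.
Proof.
have pZ b y : 0 <= b -> le 0 (b *: ppart y) by move=> b0; apply: lscale_ge0.
have [a0|a0] := leP 0 a.
  rewrite {1}(ppart_decomp x) scalerBr (fplus_extB (pZ _ _ a0) (pZ _ _ a0)).
  by rewrite !fplusZ // mulrBr.
have na0 : 0 <= - a by rewrite oppr_ge0 ltW.
have -> : a *: x = (- a) *: ppart (- x) - (- a) *: ppart x.
  by rewrite -scalerBr -opprB -ppart_decomp scaleNr scalerN opprK.
rewrite (fplus_extB (pZ _ _ na0) (pZ _ _ na0)) !fplusZ //.
by rewrite /fplus_ext mulrBr !mulNr opprK addrC.
Qed.

Lemma fplus_ext_clf : cont_lin_functional fplus_ext.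
Proof.
have [M M0 fM] := fplus_bounded.
apply: (clf_of_bound (M := M *+ 2)); first by rewrite mulrn_wge0 // ltW.
  by move=> a x y; rewrite fplus_extD fplus_extZ.
move=> x; rewrite /fplus_ext; apply: le_trans (ler_normB _ _) _.
rewrite !ger0_norm ?fplus_ge0 // mulr2n mulrDl.
apply: lerD; apply: le_trans (fM _ (ppart_ge0 _)) _; rewrite ler_pM2l //.
  exact (norm_ppart_le x).
by rewrite -[`|x|]normrN; exact: norm_ppart_le.
Qed.

End PositiveMajorant.

Lemma clf_positive_majorant {f} : cont_lin_functional f ->
  exists h, [/\ cont_lin_functional h, positive_functional h &
    forall v, le 0 v -> f v <= h v].
Proof.
move=> hf; exists (fplus_ext f); split; first exact: fplus_ext_clf.
  by move=> v v0; rewrite fplus_ext_ge0 // fplus_ge0.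
by move=> v v0; rewrite fplus_ext_ge0 // fplus_ge.
Qed.

Lemma clf_eq0_of_positive f w : cont_lin_functional f -> le 0 w ->
  (forall h, cont_lin_functional h -> positive_functional h -> h w = 0) -> f w = 0.
Proof.
move=> hf w0 hw0.
have [h1 [h1c h1pos fh1]] := clf_positive_majorant hf.
have [h2 [h2c h2pos fh2]] := clf_positive_majorant (clf_opp hf).
apply: le_anti; apply/andP; split; first by rewrite -(hw0 h1) // fh1.
by rewrite -oppr_le0 -(hw0 h2) // fh2.
Qed.

Hypothesis mul_alg : algebra_mul mul.
Hypothesis mul_ge0 : forall x y, le 0 x -> le 0 y -> le 0 (mul x y).

Lemma fmulA x y z : mul (mul x y) z = mul x (mul y z). Proof. by case: mul_alg. Qed.
Lemma fmulDl x y z : mul (x + y) z = mul x z + mul y z. Proof. by case: mul_alg. Qed.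
Lemma fmulDr x y z : mul x (y + z) = mul x y + mul x z. Proof. by case: mul_alg. Qed.
Lemma fmulZl a x y : mul (a *: x) y = a *: mul x y. Proof. by case: mul_alg. Qed.
Lemma fmulZr a x y : mul x (a *: y) = a *: mul x y. Proof. by case: mul_alg. Qed.

Lemma fmulBl x y z : mul (x - y) z = mul x z - mul y z.
Proof. by rewrite fmulDl -scaleN1r fmulZl scaleN1r. Qed.

Lemma fmulBr x y z : mul x (y - z) = mul x y - mul x z.
Proof. by rewrite fmulDr -scaleN1r fmulZr scaleN1r. Qed.

Lemma fmul_le2r {a b v} : le a b -> le 0 v -> le (mul a v) (mul b v).
Proof. by move=> /lsubr_ge0 ab v0; apply/lsubr_ge0; rewrite -fmulBl; apply: mul_ge0. Qed.

Lemma fmul_le2l {c a b} : le 0 c -> le a b -> le (mul c a) (mul c b).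
Proof. by move=> c0 /lsubr_ge0 ab; apply/lsubr_ge0; rewrite -fmulBr; apply: mul_ge0. Qed.

Lemma labs_fmul_le a b : le (labs (mul a b)) (mul (labs a) (labs b)).
Proof.
rewrite -(ppartD_ppartN a) -(ppartD_ppartN b) {1}(ppart_decomp a) {1}(ppart_decomp b).
set p := ppart a; set q := ppart (- a); set r := ppart b; set s := ppart (- b).
have -> : mul (p - q) (r - s) = (mul p r + mul q s) - (mul p s + mul q r).
  by rewrite !fmulBl !fmulBr opprB addrACA opprD.
have -> : mul (p + q) (r + s) = (mul p r + mul q s) + (mul p s + mul q r).
  by rewrite !fmulDl !fmulDr [mul q r + _]addrC addrACA.
by apply: labs_le_add; apply: laddr_ge0; apply: mul_ge0; exact: ppart_ge0.
Qed.

Lemma labs_fmulB_le_l a b x y : le (labs (mul a b - mul x y))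
  (mul (labs a) (labs (b - y)) + mul (labs (a - x)) (labs y)).
Proof.
have -> : mul a b - mul x y = mul a (b - y) + mul (a - x) y.
  by rewrite fmulBr fmulBl addrA subrK.
by apply: lle_trans (labsD_le _ _) _; apply: lleD; apply: labs_fmul_le.
Qed.

Lemma labs_fmulB_le_r a b x y : le (labs (mul a b - mul x y))
  (mul (labs (a - x)) (labs b) + mul (labs x) (labs (b - y))).
Proof.
have -> : mul a b - mul x y = mul (a - x) b + mul x (b - y).
  by rewrite fmulBr fmulBl addrA subrK.
by apply: lle_trans (labsD_le _ _) _; apply: lleD; apply: labs_fmul_le.
Qed.

Hypothesis mul_norm : forall x y, `|mul x y| <= `|x| * `|y|.

Lemma clf_fmull c f : cont_lin_functional f -> cont_lin_functional (fun v => f (mul c v)).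
Proof.
move=> hf; have [M M0 fM] := clf_bounded hf.
apply: (clf_of_bound (M := M * `|c|)); first by rewrite mulr_ge0 // ltW.
  by move=> a x y; case: hf => flin _; rewrite fmulDr fmulZr flin.
move=> x; apply: le_trans (fM _) _; rewrite -mulrA ler_pM2l //; exact: mul_norm.
Qed.

Section Nets.
Context {B : Type} {leB : B -> B -> Prop}.

Lemma weakly_null_fmull c (z : B -> E) :
  weakly_null leB z -> weakly_null leB (fun b => mul c (z b)).
Proof. by move=> z0 f hf; apply: (z0 (fun v => f (mul c v))); apply: clf_fmull. Qed.

Lemma mw_cvgP {zn : B -> E} {z} : mw_cvg le join mul leB zn z <->
  (forall u, le 0 u -> weakly_null leB (fun b => mul (labs (zn b - z)) u)).
Proof.
by split=> zn_z u u0 f hf; [rewrite -(clf0 hf) | rewrite (clf0 hf)]; apply: zn_z.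
Qed.

Lemma weakly_null_le {w Z : B -> E} : directed_set leB ->
  (exists b0, forall b, leB b0 b -> le 0 (w b) /\ le (w b) (Z b)) ->
  weakly_null leB Z -> weakly_null leB w.
Proof.
move=> hB [b0 wZ] Z0 f hf.
have [h1 [h1c h1pos fh1]] := clf_positive_majorant hf.
have [h2 [h2c h2pos fh2]] := clf_positive_majorant (clf_opp hf).
apply: (net_cvg0_le hB _ (fun b => h1 (Z b) + h2 (Z b))); last first.
  exact: net_cvg0D hB _ _ (Z0 _ h1c) (Z0 _ h2c).
exists b0 => b /wZ [w0 wZb].
have := positive_functional_mono h1c h1pos wZb.
have := positive_functional_mono h2c h2pos wZb.
have := h1pos _ w0; have := h2pos _ w0; have := fh1 _ w0; have := fh2 _ w0.
rewrite ler_norml => /= *; apply/andP; split; lra.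
Qed.

Definition tail_minorant (d t : B -> E) :=
  forall b, le 0 (d b) /\ forall b', leB b b' -> le (d b) (t b').

(* For positive h, h (mul (d b) v) <= h (mul |zn b' - z| v) for all b' >= b, and the right side tends to 0. *)
Lemma clf_fmul_tail_minorant {zn : B -> E} {z d} : directed_set leB ->
  mw_cvg le join mul leB zn z -> tail_minorant d (fun b => labs (zn b - z)) ->
  forall b v g, le 0 v -> cont_lin_functional g -> g (mul (d b) v) = 0.
Proof.
move=> hB zn_z dmin b v g v0 hg; have [db0 dle] := dmin b.
apply: clf_eq0_of_positive => //; first exact: mul_ge0.
move=> h hh hpos; apply: le_anti; rewrite hpos ?andbT; last exact: mul_ge0.
rewrite leNgt; apply/negP => hpos_lt.
have [b1 hb1] := mw_cvgP.1 zn_z _ v0 h hh _ hpos_lt.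
have [c [bc b1c]] := directed_ub hB b b1.
have := hb1 c b1c; rewrite subr0 => /(le_lt_trans (ler_norm _)).
apply/negP; rewrite -leNgt; apply: positive_functional_mono => //.
exact: fmul_le2r (dle _ bc) v0.
Qed.

Lemma monotone_net_tail_minorant {zn : B -> E} z : net_monotone le leB zn ->
  exists d, tail_minorant d (fun b => labs (zn b - z)) /\
    forall b0 b, leB b0 b -> le (labs (zn b)) (labs (zn b0) + labs z + d b).
Proof.
case=> [inc|dec].
  exists (fun b => ppart (zn b - z)); split.
    move=> b; split => // b' bb'; apply: lle_trans (ppart_le_labs _).
    by apply: ppart_mono; apply: lleD2r; apply: inc.
  by move=> b0 b /inc; apply: labs_le_ppart.
exists (fun b => ppart (z - zn b)); split.
  move=> b; split => // b' bb'; rewrite labs_subC; apply: lle_trans (ppart_le_labs _).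
  by apply: ppart_mono; apply: lleD2l; apply: lleN; apply: dec.
move=> b0 b /dec/lleN/(labs_le_ppart (- z)).
by rewrite [- zn b + _]addrC !labsN opprK.
Qed.

End Nets.

Section ProductNets.
Context {A : Type} {leA : A -> A -> Prop}.
Hypothesis hA : directed_set leA.
Variables (xn yn : A -> E) (x y : E).
Hypotheses (hx : mw_cvg le join mul leA xn x) (hy : mw_cvg le join mul leA yn y).

Let leP := prod_le leA leA.

Lemma mw_cvg_fmul_monotone_l : net_monotone le leA xn ->
  mw_cvg le join mul leP (fun p => mul (xn p.1) (yn p.2)) (mul x y).
Proof.
move=> xmon; apply/mw_cvgP => u u0.
have hP := prod_directed hA; have hi := directed_inhabited hA; have [a0] := hi.
have [d [dmin xd]] := monotone_net_tail_minorant x xmon.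
pose ey b := mul (labs (yn b - y)) u.
have ey0 b : le 0 (ey b) by apply: mul_ge0.
apply: (weakly_null_le (Z := fun p => mul (labs (xn a0)) (ey p.2) + mul (labs x) (ey p.2)
    + mul (d p.1) (ey p.2) + mul (labs (xn p.1 - x)) (mul (labs y) u))) => //.
  exists (a0, a0) => p [a0p _]; split; first exact: mul_ge0.
  apply: lle_trans (fmul_le2r (labs_fmulB_le_l _ _ x y) u0) _.
  rewrite fmulDl !fmulA; apply: lleD2r; rewrite -!fmulDl.
  exact: fmul_le2r (xd _ _ a0p) (ey0 _).
have ey_null := mw_cvgP.1 hy _ u0.
apply: (weakly_nullD hP (weakly_nullD hP (weakly_nullD hP _ _) _) _).
- exact: weakly_null_snd hi (weakly_null_fmull _ _ ey_null).
- exact: weakly_null_snd hi (weakly_null_fmull _ _ ey_null).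
- apply: (weakly_null_clf0 (directed_inhabited hP)) => g hg p.
  exact: clf_fmul_tail_minorant hA hx dmin _ _ _ (ey0 _) hg.
exact: weakly_null_fst hi (mw_cvgP.1 hx _ (mul_ge0 _ _ (labs_ge0 y) u0)).
Qed.

Lemma mw_cvg_fmul_monotone_r : net_monotone le leA yn ->
  mw_cvg le join mul leP (fun p => mul (xn p.1) (yn p.2)) (mul x y).
Proof.
move=> ymon; apply/mw_cvgP => u u0.
have hP := prod_directed hA; have hi := directed_inhabited hA; have [a0] := hi.
have [d [dmin yd]] := monotone_net_tail_minorant y ymon.
pose ex a := labs (xn a - x).
apply: (weakly_null_le (Z := fun p => mul (ex p.1) (mul (labs (yn a0)) u)
    + mul (ex p.1) (mul (labs y) u) + mul (ex p.1) (mul (d p.2) u)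
    + mul (labs x) (mul (labs (yn p.2 - y)) u))) => //.
  exists (a0, a0) => p [_ a0p]; split; first exact: mul_ge0.
  apply: lle_trans (fmul_le2r (labs_fmulB_le_r _ _ x y) u0) _.
  rewrite fmulDl !fmulA; apply: lleD2r; rewrite -!fmulDr -!fmulDl.
  exact: fmul_le2l (labs_ge0 _) (fmul_le2r (yd _ _ a0p) u0).
have ex_null v := mw_cvgP.1 hx _ (mul_ge0 _ _ (labs_ge0 v) u0).
apply: (weakly_nullD hP (weakly_nullD hP (weakly_nullD hP _ _) _) _).
- exact: weakly_null_fst hi (ex_null (yn a0)).
- exact: weakly_null_fst hi (ex_null y).
- apply: (weakly_null_clf0 (directed_inhabited hP)) => g hg p.
  exact: (clf_fmul_tail_minorant hA hy dmin p.2 u (fun v => g (mul (ex p.1) v)) u0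
    (clf_fmull _ _ hg)).
exact: weakly_null_snd hi (weakly_null_fmull _ _ (mw_cvgP.1 hy _ u0)).
Qed.

End ProductNets.
End BanachFAlgebra.

Theorem proposition2p7 (R : realType) (E : completeNormedModType R)
  (le : E -> E -> Prop) (join meet mul : E -> E -> E)
  (hE : banach_f_algebra le join meet mul)
  (A : Type) (leA : A -> A -> Prop) (hA : directed_set leA)
  (xn yn : A -> E) (x y : E)
  (hx : mw_cvg le join mul leA xn x)
  (hy : mw_cvg le join mul leA yn y)
  (hmon : net_monotone le leA xn \/ net_monotone le leA yn) :
  mw_cvg le join mul (prod_le leA leA)
    (fun p : A * A => mul (xn p.1) (yn p.2)) (mul x y).
Proof.
have [[hVL lattice_norm] [_ mul_alg mul_ge0 _] mul_norm] := hE.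
case: hmon => [xmon | ymon].
  exact: (mw_cvg_fmul_monotone_l _ _ _ _ hVL lattice_norm mul_alg mul_ge0 mul_norm
    hA _ _ _ _ hx hy xmon).
exact: (mw_cvg_fmul_monotone_r _ _ _ _ hVL lattice_norm mul_alg mul_ge0 mul_norm
  hA _ _ _ _ hx hy ymon).
Qed.
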